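(* Let $D\subset\mathbb R$, $f:D\to\mathbb F$, and $t_1,t_2\in D$ with $g(t_1)=g(t_2)$. Then $f$ is $g$-continuous at $t_1$ if and only if $f$ is $g$-continuous at $t_2$, and in that case $f(t_1)=f(t_2)$.
   Context: $g:\mathbb R\to\mathbb R$ is nondecreasing and left-continuous, $\mathbb F\in\{\mathbb R,\mathbb C\}$. A function $f:D\subset\mathbb R\to\mathbb F$ is $g$-continuous at $t\in D$ if for every $\varepsilon>0$ there is $\delta>0$ such that $|f(t)-f(s)|<\varepsilon$ for every $s\in D$ with $|g(t)-g(s)|<\delta$. *)

From Stdlib Require Import Reals.
From Coquelicot Require Import Coquelicot.
Open Scope R_scope.

Definition nondecreasing (g : R -> R) : Prop := forall x y, x <= y -> g x <= g y.
Definition left_continuous (g : R -> R) : Prop :=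
  forall t eps, 0 < eps -> exists delta, 0 < delta /\
    forall s, t - delta < s <= t -> Rabs (g s - g t) < eps.

Definition g_continuous_R (g : R -> R) (D : R -> Prop) (f : R -> R) (t : R) : Prop :=
  forall eps, 0 < eps -> exists delta, 0 < delta /\
    forall s, D s -> Rabs (g t - g s) < delta -> Rabs (f t - f s) < eps.

Definition g_continuous_C (g : R -> R) (D : R -> Prop) (f : R -> C) (t : R) : Prop :=
  forall eps, 0 < eps -> exists delta, 0 < delta /\
    forall s, D s -> Rabs (g t - g s) < delta -> Cmod (Cminus (f t) (f s)) < eps.

From Stdlib Require Import Reals Lra Classical.
From Coquelicot Require Import Coquelicot.
Open Scope R_scope.

(* Points with the same value of g cannot be separated by g-continuity: taking
   s := t2 in the definition at t1 shows that |f t1 - f t2| is below every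
   eps > 0, so f t1 = f t2; and once g and f agree at t1 and t2, the two
   g-continuity conditions are literally the same.  No property of g is used,
   and the argument works in any normed module, covering F = R and F = C. *)

Definition g_continuous {K : AbsRing} {V : NormedModule K}
    (g : R -> R) (D : R -> Prop) (f : R -> V) (t : R) : Prop :=
  forall eps, 0 < eps -> exists delta, 0 < delta /\
    forall s, D s -> Rabs (g t - g s) < delta -> norm (minus (f t) (f s)) < eps.

Section SameLevel.
Context {K : AbsRing} {V : NormedModule K}.
Variables (g : R -> R) (D : R -> Prop) (f : R -> V) (t1 t2 : R).
Hypotheses (Dt2 : D t2) (g_t1t2 : g t1 = g t2).

Lemma g_continuous_eq : g_continuous g D f t1 -> f t1 = f t2.
Proof.
intros f_gc; apply NNPP; intros f_neq.
destruct (f_gc _ (norm_minus_gt_0 _ _ f_neq)) as [delta [delta_gt0 f_close]].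
assert (g_close : Rabs (g t1 - g t2) < delta)
  by (rewrite g_t1t2, Rminus_diag, Rabs_R0; exact delta_gt0).
specialize (f_close t2 Dt2 g_close); lra.
Qed.

Lemma g_continuous_transfer : g_continuous g D f t1 -> g_continuous g D f t2.
Proof.
intros f_gc; unfold g_continuous.
rewrite <- g_t1t2, <- (g_continuous_eq f_gc); exact f_gc.
Qed.

End SameLevel.

Lemma g_continuous_iff {K : AbsRing} {V : NormedModule K}
    (g : R -> R) (D : R -> Prop) (f : R -> V) (t1 t2 : R) :
  D t1 -> D t2 -> g t1 = g t2 -> (g_continuous g D f t1 <-> g_continuous g D f t2).
Proof.
intros Dt1 Dt2 g_t1t2; split; apply g_continuous_transfer; auto.
Qed.

Theorem lemma2p15 (g : R -> R) (Hmono : nondecreasing g) (Hlc : left_continuous g)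
  (D : R -> Prop) (t1 t2 : R) (Ht1 : D t1) (Ht2 : D t2) (Hg : g t1 = g t2) :
  (forall f : R -> R,
     (g_continuous_R g D f t1 <-> g_continuous_R g D f t2) /\
     (g_continuous_R g D f t1 -> f t1 = f t2)) /\
  (forall f : R -> C,
     (g_continuous_C g D f t1 <-> g_continuous_C g D f t2) /\
     (g_continuous_C g D f t1 -> f t1 = f t2)).
Proof.
split; intros f; split.
- exact (g_continuous_iff (V := R_NormedModule) g D f t1 t2 Ht1 Ht2 Hg).
- exact (g_continuous_eq (V := R_NormedModule) g D f t1 t2 Ht2 Hg).
- exact (g_continuous_iff (V := C_NormedModule) g D f t1 t2 Ht1 Ht2 Hg).
- exact (g_continuous_eq (V := C_NormedModule) g D f t1 t2 Ht2 Hg).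
Qed.
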